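(* Let $(X,d)$ be a complete Alexandrov space, $G\subset X$ a closed, geodesically convex set with $(G,d)$ separable, $K>0$, and $\mu\in\mathfrak P(F_K(G))$. Let $g(x):=\int_{F_K(G)}f(x)\,d\mu(f)$ and let $\mathbb E\mu\in G$ denote the unique minimizer of $g$ over $G$. Then for all $x\in G$, \[ d(x,\mathbb E\mu)^2\le\frac2K\int_{F_K(G)}\big[f(x)-f(\mathbb E\mu)\big]\,d\mu(f).\]
   Context: Minimal geodesics $x\#_ty$ satisfy $d(x\#_sy,x\#_ty)=|s-t|d(x,y)$. A function $h$ is $K$-convex if $h(x\#_ty)\le(1-t)h(x)+th(y)-\frac K2t(1-t)d(x,y)^2$ along all minimal geodesics. $F_K(G)$ is the set of lower semi-continuous $K$-convex functions $G\to(-\infty,\infty]$ not identically $+\infty$, equipped with the $\sigma$-field $\mathcal E$ generated by the sets $\{h:\inf_Oh<\alpha\}$ for $O\subseteq G$ open and $\alpha\in\mathbb R$ (equivalently, the Effros $\sigma$-field on epigraphs). $\mathfrak P(F_K(G))$ is the set of complete probability measures $\mu$ on $(F_K(G),\mathcal E)$ such that $g(x)=\int f(x)\,d\mu(f)$ is a lower semi-continuous, $(-\infty,+\infty]$-valued, $K$-convex function on $G$ that is finite at some point of $G$. *)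

From HB Require Import structures.
From mathcomp Require Import all_boot all_order all_algebra.
From mathcomp Require Import all_classical all_reals all_analysis.
Set Implicit Arguments. Unset Strict Implicit. Unset Printing Implicit Defensive.
Import Order.TTheory GRing.Theory Num.Theory.
Local Open Scope classical_set_scope.
Local Open Scope ring_scope.

Section MetricDefs.
Context {R : realType} {X : Type}.
Variable d : X -> X -> R.

Definition is_metric : Prop :=
  [/\ forall x y, 0 <= d x y,
      forall x y, d x y = 0 <-> x = y,
      forall x y, d x y = d y x &
      forall x y z, d x z <= d x y + d y z].

Definition metric_complete : Prop :=
  forall u : nat -> X,
    (forall e : R, 0 < e -> exists N, forall m n, (N <= m)%N -> (N <= n)%N ->
        d (u m) (u n) < e) ->
    exists l, forall e : R, 0 < e -> exists N, forall n, (N <= n)%N -> d (u n) l < e.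

(* gamma is a minimal geodesic from x to y, parametrized on [0,1]:
   gamma t = x #_t y, with d(x#_s y, x#_t y) = |s - t| d(x,y). *)
Definition min_geodesic (gamma : R -> X) (x y : X) : Prop :=
  [/\ gamma 0 = x, gamma 1 = y &
      forall s t, 0 <= s <= 1 -> 0 <= t <= 1 ->
        d (gamma s) (gamma t) = `|s - t| * d x y].

Definition geodesic_space : Prop :=
  forall x y, exists gamma, min_geodesic gamma x y.

Definition coshR (r : R) : R := (expR r + expR (- r)) / 2.
Definition sinhR (r : R) : R := (expR r - expR (- r)) / 2.

(* Triangle comparison (curvature bounded below by kappa), in the form of
   the comparison of the distance from a vertex x to a point gamma t of the
   opposite side with the corresponding distance in the model plane M_kappa
   (Stewart's formula in M_kappa). *)
Definition curv_bounded_below (kappa : R) : Prop :=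
  forall (x y z : X) (gamma : R -> X) (t : R),
    min_geodesic gamma y z -> 0 <= t <= 1 ->
    let a := d x y in let b := d x z in let L := d y z in
    let e := d x (gamma t) in
    (kappa = 0 ->
       (1 - t) * a ^+ 2 + t * b ^+ 2 - t * (1 - t) * L ^+ 2 <= e ^+ 2) /\
    (0 < kappa -> let s := Num.sqrt kappa in
       a + b + L < 2 * pi / s ->
       cos (s * e) * sin (s * L)
         <= cos (s * a) * sin (s * ((1 - t) * L)) + cos (s * b) * sin (s * (t * L))) /\
    (kappa < 0 -> let s := Num.sqrt (- kappa) in
       coshR (s * a) * sinhR (s * ((1 - t) * L)) + coshR (s * b) * sinhR (s * (t * L))
         <= coshR (s * e) * sinhR (s * L)).

Definition alexandrov_space : Prop :=
  [/\ is_metric, metric_complete, geodesic_space &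
      exists kappa : R, curv_bounded_below kappa].

Definition closed_set (G : set X) : Prop :=
  forall x, (forall e : R, 0 < e -> exists2 y, G y & d x y < e) -> G x.

Definition geod_convex (G : set X) : Prop :=
  forall x y gamma t, G x -> G y -> min_geodesic gamma x y -> 0 <= t <= 1 ->
    G (gamma t).

Definition separable_set (G : set X) : Prop :=
  exists D : set X, [/\ countable D, D `<=` G &
    forall x, G x -> forall e : R, 0 < e -> exists2 y, D y & d x y < e].

Definition pt (G : set X) := {x : X | G x}.

Definition open_in (G : set X) (O : set (pt G)) : Prop :=
  forall x, O x -> exists2 r : R, 0 < r &
    forall y : pt G, d (proj1_sig x) (proj1_sig y) < r -> O y.

Definition lsc_on (G : set X) (h : pt G -> \bar R) : Prop :=
  forall (x : pt G) (alpha : R), (alpha%:E < h x)%E ->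
    exists2 r : R, 0 < r &
      forall y : pt G, d (proj1_sig x) (proj1_sig y) < r -> (alpha%:E < h y)%E.

Definition K_convex (G : set X) (K : R) (h : pt G -> \bar R) : Prop :=
  forall (x y z : pt G) (gamma : R -> X) (t : R),
    min_geodesic gamma (proj1_sig x) (proj1_sig y) -> 0 <= t <= 1 ->
    gamma t = proj1_sig z ->
    (h z <= (1 - t)%:E * h x + t%:E * h y
            - (K / 2 * t * (1 - t) * (d (proj1_sig x) (proj1_sig y)) ^+ 2)%:E)%E.

Definition FK (G : set X) (K : R) : set (pt G -> \bar R) :=
  [set h | [/\ forall x, h x != -oo%E, lsc_on h, K_convex K h &
           exists x, h x != +oo%E]].

Definition effros_gen (G : set X) : set (set (pt G -> \bar R)) :=
  [set A | exists (O : set (pt G)) (alpha : R), open_in O /\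
     A = [set h | (ereal_inf [set h y | y in O] < alpha%:E)%E]].

End MetricDefs.

(* A complete probability measure on (F_K(G), E): the probability P lives on
   an abstract measurable type T identified with F_K(G) through the
   bijection ev : T -> F_K(G); its sigma-algebra is the P-completion of
   (the pull-back of) the Effros sigma-field E. *)
Definition complete_prob_on_FK {R : realType} {X : Type} (d : X -> X -> R)
  (G : set X) (K : R) {dT : measure_display} {T : measurableType dT}
  (P : probability T R) (ev : T -> (pt G -> \bar R)) : Prop :=
  [/\ injective ev,
      range ev = FK d K,
      (forall A, effros_gen d (G:=G) A -> measurable (ev @^-1` A)),
      measure_is_complete P &
      (forall A : set T, measurable A ->
         exists2 B : set T,
           <<s [set ev @^-1` E | E in effros_gen d (G:=G)] >> B &
           P.-negligible ((A `\` B) `|` (B `\` A)))].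

Definition mean_fun {R : realType} {X : Type} (G : set X)
  {dT : measure_display} {T : measurableType dT}
  (P : probability T R) (ev : T -> (pt G -> \bar R)) : pt G -> \bar R :=
  fun x => (\int[P]_f ev f x)%E.

Definition in_frakP {R : realType} {X : Type} (d : X -> X -> R)
  (G : set X) (K : R) {dT : measure_display} {T : measurableType dT}
  (P : probability T R) (ev : T -> (pt G -> \bar R)) : Prop :=
  [/\ complete_prob_on_FK d K P ev,
      lsc_on d (mean_fun P ev),
      (forall x, mean_fun P ev x != -oo%E),
      K_convex d K (mean_fun P ev) &
      exists x, mean_fun P ev x \is a fin_num].

From HB Require Import structures.
From mathcomp Require Import all_boot all_order all_algebra.
From mathcomp Require Import all_classical all_reals all_analysis.
From mathcomp Require Import ring lra measurable_realfun.
Import Order.TTheory GRing.Theory Num.Theory.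
Local Open Scope classical_set_scope.
Local Open Scope ring_scope.

(* Along a minimal geodesic from Emu to x, minimality of g at Emu and
   K-convexity of g give g(Emu) <= (1-t) g(Emu) + t g(x) - K/2 t(1-t) d^2,
   i.e. (1-t) K/2 d^2 <= g(x) - g(Emu) for every t in ]0,1]; letting t -> 0
   yields the bound.  The difference g(x) - g(Emu) is the integral of
   f(x) - f(Emu) because f(Emu) is integrable, which is seen on positive and
   negative parts.  This needs the evaluations f |-> f(x) to be measurable:
   by lower semicontinuity, {f | r < f(x)} is a countable union of complements
   of generators {f | inf_B f < a} of the Effros sigma-field, B small balls. *)

Lemma ler_of_forall_1BM (R : realFieldType) (a b : R) : 0 <= a ->
  (forall t, 0 < t <= 1 -> (1 - t) * a <= b) -> a <= b.
Proof.
move=> a_ge0 Hab; apply/ler_addgt0Pr => e e_gt0.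
have ea_gt0 : 0 < e + a by rewrite ltr_wpDr.
set t := e / (e + a).
have t_gt0 : 0 < t by rewrite divr_gt0.
have t_le1 : t <= 1 by rewrite ler_pdivrMr // mul1r lerDl.
have ta_le : t * a <= e.
  by rewrite mulrAC -mulrA ler_piMr ?(ltW e_gt0) // ler_pdivrMr // mul1r lerDr ltW.
have := Hab t; rewrite t_gt0 t_le1 mulrBl mul1r => /(_ isT); lra.
Qed.

Section KConvexMinimizer.
Context {R : realType} {X : Type} {d : X -> X -> R} {G : set X} {K : R}.
Context {h : pt G -> \bar R}.
Hypotheses (d_sym : forall x y, d x y = d y x) (geo : geodesic_space d)
  (convG : geod_convex d G) (K_gt0 : 0 < K) (hK : K_convex d K h).
Context {m : pt G}.
Hypothesis h_min : forall y, (h m <= h y)%E.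

Lemma K_convex_minimizer_slope (x : pt G) (hm hx t : R) :
  h m = hm%:E -> h x = hx%:E -> 0 < t <= 1 ->
  (1 - t) * (K / 2 * d (sval x) (sval m) ^+ 2) <= hx - hm.
Proof.
move=> hmE hxE /andP[t_gt0 t_le1]; have t01 : 0 <= t <= 1 by rewrite ltW.
have [gam gam_geo] := geo (sval m) (sval x).
pose z : pt G := exist _ (gam t) (convG _ _ _ _ (proj2_sig m) (proj2_sig x) gam_geo t01).
have := le_trans (h_min z) (hK m x z gam t gam_geo t01 erefl).
rewrite hmE hxE -!EFinM -EFinD lee_fin d_sym => hz.
rewrite -(ler_pM2l t_gt0); lra.
Qed.

Lemma K_convex_minimizer_dist (x : pt G) :
  h m \is a fin_num -> h x != -oo%E ->
  (((d (sval x) (sval m)) ^+ 2)%:E <= (2 / K)%:E * (h x - h m))%E.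
Proof.
move=> /fineK hmE; rewrite -hmE; case hxE: (h x) => [hx| |] // _; last first.
  by rewrite /= mulry gtr0_sg ?divr_gt0 // mul1e leey.
rewrite -EFinB -EFinM lee_fin.
have -> : d (sval x) (sval m) ^+ 2 = 2 / K * (K / 2 * d (sval x) (sval m) ^+ 2).
  by field; rewrite gt_eqF.
apply: ler_wpM2l; first by rewrite divr_ge0 ?ltW.
apply: ler_of_forall_1BM => [|t t01].
  by rewrite mulr_ge0 ?sqr_ge0 ?divr_ge0 ?ltW.
exact: K_convex_minimizer_slope (esym hmE) hxE t01.
Qed.

End KConvexMinimizer.

Section PosNegParts.
Context {R : realDomainType}.
Local Open Scope ereal_scope.

Lemma maxe_sube_posnegE (x y : \bar R) : x != -oo -> y != -oo ->
  maxe (x - y) 0 + maxe (- x) 0 + maxe y 0 =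
  maxe (- (x - y)) 0 + maxe x 0 + maxe (- y) 0.
Proof.
case: x => [r| |] // _; case: y => [s| |] // _.
  rewrite /= -!EFin_max -!EFinD; congr EFin.
  by rewrite !maxEle; repeat case: ifPn => ?; lra.
all: by rewrite /= ?maxNye -?EFin_max ?addye ?addeNy.
Qed.

Lemma maxe_oppB_le (x y : \bar R) : x != -oo -> y != -oo ->
  maxe (- (x - y)) 0 <= maxe (- x) 0 + maxe y 0.
Proof.
case: x => [r| |] // _; case: y => [s| |] // _.
  rewrite /= -!EFin_max -!EFinD lee_fin.
  by rewrite !maxEle; repeat case: ifPn => ?; lra.
all: rewrite /= ?maxNye -?EFin_max ?addeNy ?add0e ?lexx //.
all: by rewrite ?leeDr lee_fin le_max lexx orbT.
Qed.

Lemma sube_of_posnegE (hp hn ap an bp bn : \bar R) :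
  hn \is a fin_num -> an \is a fin_num -> bp \is a fin_num -> bn \is a fin_num ->
  hp + an + bp = hn + ap + bn -> hp - hn = ap - an - (bp - bn).
Proof.
case: hn an bp bn => [hn| |] // [an| |] // [bp| |] // [bn| |] // _ _ _ _.
case: hp ap => [hp| |] [ap| |] //= E.
by case: E => E; congr EFin; lra.
Qed.

End PosNegParts.

Section IntegralB.
Local Open Scope ereal_scope.
Context {dT : measure_display} {T : measurableType dT} {R : realType}.
Variable mu : {measure set T -> \bar R}.

Lemma integralB_fin_num (a b : T -> \bar R) :
  measurable_fun setT a -> measurable_fun setT b ->
  (forall t, a t != -oo) -> (forall t, b t != -oo) ->
  \int[mu]_t a t != -oo -> \int[mu]_t b t \is a fin_num ->
  \int[mu]_t (a t - b t) = \int[mu]_t a t - \int[mu]_t b t.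
Proof.
move=> ma mb aNy bNy ia ib; set h := fun t => a t - b t.
have mh : measurable_fun setT h by exact: emeasurable_funB.
have posneg_eq : \int[mu]_t h^\+ t + \int[mu]_t a^\- t + \int[mu]_t b^\+ t =
                 \int[mu]_t h^\- t + \int[mu]_t a^\+ t + \int[mu]_t b^\- t.
  rewrite -!ge0_integralD //;
    try by [ move=> t _; rewrite ?adde_ge0 ?funepos_ge0 ?funeneg_ge0
           | do ?apply: emeasurable_funD;
             solve [exact: measurable_funepos | exact: measurable_funeneg] ].
  apply: eq_integral => t _; rewrite !funeposE !funenegE.
  exact: maxe_sube_posnegE.
have neg_le : \int[mu]_t h^\- t <= \int[mu]_t a^\- t + \int[mu]_t b^\+ t.
  rewrite -ge0_integralD //; [|exact: measurable_funeneg|exact: measurable_funepos].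
  apply: ge0_le_integral => //; first exact: measurable_funeneg.
    by apply: emeasurable_funD; [exact: measurable_funeneg|exact: measurable_funepos].
  by move=> t _; rewrite !funeposE !funenegE; exact: maxe_oppB_le.
rewrite (integralE _ _ h) (integralE _ _ a) (integralE _ _ b) in ia ib *.
move: ib; rewrite fin_numB => /andP[bp_fin bn_fin].
have an_fin : \int[mu]_t a^\- t \is a fin_num.
  rewrite ge0_fin_numE ?integral_ge0 // ltNge leye_eq; apply: contra ia => /eqP ->.
  by rewrite addeNy.
have hn_fin : \int[mu]_t h^\- t \is a fin_num.
  rewrite ge0_fin_numE ?integral_ge0 //; apply: le_lt_trans neg_le _.
  by rewrite lte_add_pinfty // -ge0_fin_numE ?integral_ge0.
exact: sube_of_posnegE.
Qed.

End IntegralB.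

Section EvaluationMeasurable.
Context {R : realType} {X : Type} {d : X -> X -> R} {G : set X}.
Hypotheses (d_refl : forall x, d x x = 0)
  (d_tri : forall x y z, d x z <= d x y + d y z).

Definition pt_ball (x : pt G) (r : R) : set (pt G) :=
  [set y | d (sval x) (sval y) < r].

Lemma open_in_pt_ball x r : open_in d (pt_ball x r).
Proof.
move=> y xy_lt; exists (r - d (sval x) (sval y)); first by rewrite subr_gt0.
move=> z yz_lt; have := d_tri (sval x) (sval y) (sval z); rewrite /pt_ball /=; lra.
Qed.

Lemma lsc_gtE (h : pt G -> \bar R) (x : pt G) (r : R) : lsc_on d h ->
  (r%:E < h x)%E <-> exists k m : nat,
    ~ (ereal_inf (h @` pt_ball x m.+1%:R^-1) < (r + k.+1%:R^-1)%:E)%E.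
Proof.
move=> h_lsc; split => [r_lt|[k [m inf_ge]]].
- have [k rk_lt] : exists k : nat, ((r + k.+1%:R^-1)%:E < h x)%E.
    move: r_lt; case: (h x) => [v| |] //= r_lt; last by exists 0%N; rewrite ltry.
    by have [k ?] := ltr_add_invr (r_lt : r < v); exists k; rewrite lte_fin.
  have [rho rho_gt0 h_gt] := h_lsc x _ rk_lt.
  have [m m_lt] := ltr_add_invr rho_gt0; rewrite add0r in m_lt.
  exists k, m => /ereal_inf_lt [_ [y xy_lt <-]]; apply/negP; rewrite -leNgt ltW //.
  exact/h_gt/(lt_trans xy_lt).
- have inf_le : (ereal_inf (h @` pt_ball x m.+1%:R^-1) <= h x)%E.
    by apply: ereal_inf_lbound; exists x; rewrite // /pt_ball /= d_refl invr_gt0.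
  apply: lt_le_trans inf_le; rewrite ltNge; apply: contra_notN inf_ge => inf_le.
  by apply: le_lt_trans inf_le _; rewrite lte_fin ltrDl invr_gt0.
Qed.

Lemma measurable_eval {dT : measure_display} {T : measurableType dT}
    (ev : T -> pt G -> \bar R) :
  (forall t, lsc_on d (ev t)) ->
  (forall A, effros_gen d A -> measurable (ev @^-1` A)) ->
  forall x, measurable_fun setT (fun t => ev t x).
Proof.
move=> ev_lsc ev_meas x.
apply: (measurability (@ErealGenOInfty.G R)).
  exact: ErealGenOInfty.measurableE.
move=> _ [_ [r ->] <-].
have -> : setT `&` (fun t => ev t x) @^-1` `]r%:E, +oo[ =
    \bigcup_k \bigcup_m ~` (ev @^-1` [set h |
      (ereal_inf (h @` pt_ball x m.+1%:R^-1) < (r + k.+1%:R^-1)%:E)%E]).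
  apply/seteqP; split => t /=; rewrite in_itv /= andbT.
    by move=> [_ /(lsc_gtE _ _ _ (ev_lsc t))[k [m ?]]]; exists k => //; exists m.
  by move=> [k _ [m _ ?]]; split => //; apply/(lsc_gtE _ _ _ (ev_lsc t)); exists k, m.
apply: bigcupT_measurable => k; apply: bigcupT_measurable => m.
apply/measurableC/ev_meas.
by exists (pt_ball x m.+1%:R^-1), (r + k.+1%:R^-1); split => //; exact: open_in_pt_ball.
Qed.

End EvaluationMeasurable.

Theorem proposition6p5 (R : realType) (X : Type) (d : X -> X -> R)
  (G : set X) (K : R) (dT : measure_display) (T : measurableType dT)
  (P : probability T R) (ev : T -> (pt G -> \bar R)) (Emu : pt G) :
  alexandrov_space d -> closed_set d G -> geod_convex d G ->
  separable_set d G -> 0 < K ->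
  in_frakP d K P ev ->
  (forall x : pt G, (mean_fun P ev Emu <= mean_fun P ev x)%E) ->
  forall x : pt G,
    (((d (proj1_sig x) (proj1_sig Emu)) ^+ 2)%:E
      <= (2 / K)%:E * \int[P]_f (ev f x - ev f Emu))%E.
Proof.
move=> [[_ d_eq0 d_sym d_tri] _ geo _] _ convG _ K_gt0
  [[_ ev_range ev_meas _ _] _ g_nNy g_convex [x0 g_x0_fin]] g_min x.
have ev_FK t : FK d K (ev t) by rewrite -ev_range; exists t.
have d_refl y : d y y = 0 by exact/d_eq0.
have ev_lsc t : lsc_on d (ev t) by case: (ev_FK t).
have ev_nNy t y : ev t y != -oo%E by case: (ev_FK t).
have ev_x_meas := measurable_eval d_refl d_tri _ ev_lsc ev_meas.
have g_Emu_fin : mean_fun P ev Emu \is a fin_num.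
  move: (g_min x0) g_x0_fin (g_nNy Emu).
  by case: (mean_fun P ev Emu) => [r| |] //; case: (mean_fun P ev x0).
rewrite integralB_fin_num //; last exact: g_nNy.
exact (K_convex_minimizer_dist d_sym geo convG K_gt0 g_convex g_min x g_Emu_fin (g_nNy x)).
Qed.
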